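(* For every finite-dimensional representation $\rho$ of $\mathrm{U}(n)$ and every weighted hypergraph $\Gamma=([n],w)$, the torus-invariant subspace $\mathrm{TorInv}(\rho)$ is invariant under ${\cal L}(\Gamma,\rho)$.
   Context: A weighted hypergraph $\Gamma=([n],w)$ assigns a weight $w_B$ to every $B\subseteq[n]$. $\mathrm{U}_B\le\mathrm{U}(n)$ is the subgroup of unitaries coinciding with the identity outside the minor with rows and columns in $B$, and $\mu_B$ its Haar probability measure; ${\cal L}(\Gamma,\rho)=\sum_Bw_B[I-\int_{\mathrm{U}_B}\rho(A)d\mu_B(A)]$. $T_n\le\mathrm{U}(n)$ is the subgroup of diagonal unitary matrices and, for $\rho\colon\mathrm{U}(n)\to\mathrm{GL}(V)$, $\mathrm{TorInv}(\rho)=\{v\in V:\rho(A)v=v\ \forall A\in T_n\}$. *)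

From HB Require Import structures.
From mathcomp Require Import all_boot all_order all_algebra.
From mathcomp Require Import all_classical all_reals all_analysis.
From mathcomp Require Import complex.
Set Implicit Arguments. Unset Strict Implicit. Unset Printing Implicit Defensive.
Import Order.TTheory GRing.Theory Num.Theory.
Import numFieldNormedType.Exports.
Local Open Scope classical_set_scope.
Local Open Scope ring_scope.

Section Defs.
Context {R : realType}.
Local Notation C := R[i].

Definition adjmx m n (A : 'M[C]_(m, n)) : 'M[C]_(n, m) := (map_mx (@conjc R) A)^T.

Definition unitary n (A : 'M[C]_n) : Prop := A *m adjmx A = 1%:M.

Definition UB n (B : {set 'I_n}) : set 'M[C]_n :=
  [set A | unitary A /\ forall i j : 'I_n, (i \notin B) || (j \notin B) ->
                           A i j = (i == j)%:R].

Definition torus n : set 'M[C]_n := [set A | unitary A /\ is_diag_mx A].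

(* Borel sigma-algebra on M_n(C) = R^{2 n^2}: generated by Re/Im of entries *)
Definition mx_gen n : set (set 'M[C]_n) :=
  [set S | exists (i j : 'I_n) (Bs : set R), measurable Bs /\
     (S = (fun A : 'M[C]_n => @complex.Re R (A i j)) @^-1` Bs \/
      S = (fun A : 'M[C]_n => @complex.Im R (A i j)) @^-1` Bs)].

Definition MxP n : Type := 'M[C]_n.
HB.instance Definition _ n := Choice.on (MxP n).
HB.instance Definition _ n := isPointed.Build (MxP n) (0 : 'M[C]_n).

Definition Mx n := g_sigma_algebraType (@mx_gen n : set (set (MxP n))).

Definition cintegral dd (T : measurableType dd) (mu : {measure set T -> \bar R})
  (D : set T) (f : T -> C) : C :=
  Complex (Rintegral mu D (fun x => complex.Re (f x)))
          (Rintegral mu D (fun x => complex.Im (f x))).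

Definition mxintegral dd (T : measurableType dd) (mu : {measure set T -> \bar R})
  p q (D : set T) (F : T -> 'M[C]_(p, q)) : 'M[C]_(p, q) :=
  \matrix_(k, l) cintegral mu D (fun x => F x k l).

Definition is_haar n (B : {set 'I_n}) (mu : probability (Mx n) R) : Prop :=
  (mu (UB B : set (Mx n)) = 1)%E /\
  forall g, UB B g -> forall E : set (Mx n), measurable E ->
    mu ((fun A : Mx n => g *m (A : 'M[C]_n)) @^-1` E) = mu E.

Definition is_rep n dim (rho : 'M[C]_n -> 'M[C]_dim) : Prop :=
  [/\ rho 1%:M = 1%:M,
      (forall A B, unitary A -> unitary B -> rho (A *m B) = rho A *m rho B),
      (forall A, unitary A -> rho A \in unitmx) &
      (forall A, unitary A -> forall e : R, 0 < e -> exists2 del : R, 0 < del &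
         forall B, unitary B -> (forall i j, `|B i j - A i j| < (del%:C)%C) ->
           forall k l, `|rho B k l - rho A k l| < (e%:C)%C)].

Definition TorInv n dim (rho : 'M[C]_n -> 'M[C]_dim) : set 'cV[C]_dim :=
  [set v | forall t, torus t -> rho t *m v = v].

Definition Lap n dim (w : {set 'I_n} -> R) (rho : 'M[C]_n -> 'M[C]_dim)
  (mu : forall B : {set 'I_n}, probability (Mx n) R) : 'M[C]_dim :=
  \sum_(B : {set 'I_n}) ((w B)%:C)%C *:
     (1%:M - mxintegral (mu B) (UB B : set (Mx n)) (fun A : Mx n => rho A)).

End Defs.

(* A diagonal unitary t splits as t = t_B t_B', where t_B, the part of t on the
   coordinates in B, lies in U_B, and t_B', the part off B, commutes with U_B.
   Left invariance of the Haar measure of U_B absorbs t_B, so the average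
   M_B = int_{U_B} rho satisfies rho(t) M_B = M_B rho(t_B'); hence M_B, and with
   it L(Gamma, rho), maps torus-invariant vectors to torus-invariant vectors.
   The integrals exist because the entries of rho are Borel (rho is continuous)
   and bounded on U(n) (continuity at 1 together with a finite net of U(n)). *)

From HB Require Import structures.
From mathcomp Require Import all_boot all_order all_algebra.
From mathcomp Require Import all_classical all_reals all_analysis.
From mathcomp Require Import complex measurable_realfun lra zify.
Set Implicit Arguments. Unset Strict Implicit. Unset Printing Implicit Defensive.
Import Order.TTheory GRing.Theory Num.Theory.
Local Open Scope classical_set_scope.
Local Open Scope ring_scope.
Local Open Scope complex_scope.

Section ComplexParts.
Context {R : realType}.
Implicit Types x y : R[i].

Lemma normc_real (a : R) : `|a%:C| = `|a|%:C.
Proof. by rewrite normc_def /= expr0n /= addr0 sqrtr_sqr. Qed.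

Lemma normc_i : `|'i : R[i]| = 1.
Proof. by rewrite normc_def /= expr0n expr1n add0r sqrtr1. Qed.

Lemma normc_ge_Im x : `|complex.Im x|%:C <= `|x|.
Proof.
by rewrite -normrN -ReiNIm -[`|x|]mulr1 -normc_i -normrM normc_ge_Re.
Qed.

Lemma normc_le_Re_Im x : `|x| <= (`|complex.Re x| + `|complex.Im x|)%:C.
Proof.
rewrite {1}[x]complexE; apply: le_trans (ler_normD _ _) _.
by rewrite normrM normc_i mul1r !normc_real rmorphD.
Qed.

Lemma norm_Re_le x (K : R) : `|x| <= K%:C -> `|complex.Re x| <= K.
Proof. by rewrite -lecR; exact: le_trans (normc_ge_Re x). Qed.

Lemma norm_Im_le x (K : R) : `|x| <= K%:C -> `|complex.Im x| <= K.
Proof. by rewrite -lecR; exact: le_trans (normc_ge_Im x). Qed.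

Lemma Re_add x y : complex.Re (x + y) = complex.Re x + complex.Re y.
Proof. by case: x; case: y. Qed.

Lemma Im_add x y : complex.Im (x + y) = complex.Im x + complex.Im y.
Proof. by case: x; case: y. Qed.

Lemma Re_sub x y : complex.Re (x - y) = complex.Re x - complex.Re y.
Proof. by case: x; case: y. Qed.

Lemma Im_sub x y : complex.Im (x - y) = complex.Im x - complex.Im y.
Proof. by case: x; case: y. Qed.

Lemma Re_mul x y :
  complex.Re (x * y) = complex.Re x * complex.Re y - complex.Im x * complex.Im y.
Proof. by case: x; case: y. Qed.

Lemma Im_mul x y :
  complex.Im (x * y) = complex.Re x * complex.Im y + complex.Im x * complex.Re y.
Proof. by case: x => a b; case: y => c d /=; rewrite addrC. Qed.

End ComplexParts.

Section Unitary.
Context {R : realType} {n : nat}.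
Local Notation C := R[i].
Implicit Types A B : 'M[C]_n.

Lemma adjmxE p q (A : 'M[C]_(p, q)) i j : adjmx A i j = (A j i)^*.
Proof. by rewrite !mxE. Qed.

Lemma adjmxM A B : adjmx (A *m B) = adjmx B *m adjmx A.
Proof. by rewrite /adjmx map_mxM trmx_mul. Qed.

Lemma adjmxK A : adjmx (adjmx A) = A.
Proof. by apply/matrixP => i j; rewrite !adjmxE conjcK. Qed.

Lemma adjmx1 : adjmx (1%:M : 'M[C]_n) = 1%:M.
Proof. by rewrite /adjmx map_scalar_mx tr_scalar_mx rmorph1. Qed.

Lemma unitary_adj {A} : unitary A -> adjmx A *m A = 1%:M.
Proof. exact: mulmx1C. Qed.

Lemma unitary1 : unitary (1%:M : 'M[C]_n).
Proof. by rewrite /unitary adjmx1 mul1mx. Qed.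

Lemma unitaryM A B : unitary A -> unitary B -> unitary (A *m B).
Proof.
by rewrite /unitary adjmxM mulmxA => uA uB; rewrite -(mulmxA A) uB mulmx1.
Qed.

Lemma unitary_adjmx A : unitary A -> unitary (adjmx A).
Proof. by rewrite /unitary adjmxK; exact: unitary_adj. Qed.

Lemma unitary_entry_le1 A i j : unitary A -> `|A i j| <= 1.
Proof.
move=> /matrixP /(_ i i); rewrite !mxE eqxx mulr1n => rowi.
have sq_ge0 k : 0 <= `|A i k| ^+ 2 by rewrite exprn_ge0.
rewrite -(expr_le1 (ltn0Sn 1)) // -rowi (bigD1 j) //= adjmxE sqr_normc lerDl.
by apply: sumr_ge0 => k _; rewrite adjmxE -sqr_normc.
Qed.

Lemma unitary_diag_mx (d : 'rV[C]_n) :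
  unitary (diag_mx d) <-> forall i, d 0 i * (d 0 i)^* = 1.
Proof.
rewrite /unitary mul_diag_mx; split=> [/matrixP u i | u].
  by have := u i i; rewrite !mxE eqxx mulr1n.
apply/matrixP => i j; rewrite !mxE eq_sym.
by case: eqP => [->|_]; rewrite ?mulr1n ?u // mulr0n conjc0 mulr0.
Qed.

Lemma adjmx_mul_dist1 A0 A (e : R) : unitary A0 ->
  (forall i j, `|A i j - A0 i j| <= e%:C) ->
  forall i j, `|(adjmx A0 *m A) i j - (1%:M : 'M[C]_n) i j| <= (n%:R * e)%:C.
Proof.
move=> uA0 AA0 i j.
have -> : (adjmx A0 *m A) i j - (1%:M : 'M[C]_n) i j = (adjmx A0 *m (A - A0)) i j.
  by rewrite mulmxBr (unitary_adj uA0) !mxE.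
have -> : (n%:R * e)%:C = \sum_(p < n) e%:C.
  by rewrite sumr_const card_ord mulr_natl rmorphMn.
rewrite mxE; apply: le_trans (ler_norm_sum _ _ _) (ler_sum _ _) => p _.
rewrite normrM adjmxE normcJ !mxE -[e%:C]mul1r.
by rewrite ler_pM ?normr_ge0 ?unitary_entry_le1.
Qed.

End Unitary.

Section UnitaryMinor.
Context {R : realType} {n : nat} (B : {set 'I_n}).
Local Notation C := R[i].
Implicit Types A g t : 'M[C]_n.

Lemma UB_mulmx {g A} : UB B g -> UB B A -> UB B (g *m A).
Proof.
move=> [ug g1] [uA A1]; split=> [|i j ij]; first exact: unitaryM.
rewrite mxE; case iB: (i \in B).
  have jB : j \notin B by rewrite iB in ij.
  rewrite (bigD1 j) //= A1 ?jB ?orbT // eqxx mulr1 big1 ?addr0.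
    by rewrite g1 ?jB ?orbT.
  by move=> k /negbTE kj; rewrite A1 ?jB ?orbT // kj mulr0.
rewrite (bigD1 i) //= g1 ?iB // eqxx mul1r big1 ?addr0.
  by rewrite A1 ?iB.
by move=> k /negbTE ki; rewrite g1 ?iB // eq_sym ki mul0r.
Qed.

Lemma UB_adjmx {g} : UB B g -> UB B (adjmx g).
Proof.
move=> [ug g1]; split=> [|i j ij]; first exact: unitary_adjmx.
by rewrite adjmxE g1 1?orbC // eq_sym conjc_nat.
Qed.

Lemma preimage_mulmx_UB g : UB B g -> (fun A => g *m A) @^-1` UB B = UB B.
Proof.
move=> Bg; apply/seteqP; split=> A /=; last exact: UB_mulmx.
move=> /(UB_mulmx (UB_adjmx Bg)).
by rewrite mulmxA (unitary_adj Bg.1) mul1mx.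
Qed.

Definition torus_part (S : {set 'I_n}) t : 'M[C]_n :=
  diag_mx (\row_i (if i \in S then t i i else 1)).

Lemma torus_part_unitary S t : torus t -> unitary (torus_part S t).
Proof.
move=> [ut /is_diag_mxP tD]; apply/unitary_diag_mx => i; rewrite mxE.
case: (i \in S); last by rewrite rmorph1 mulr1.
move/matrixP: ut => /(_ i i).
rewrite !mxE eqxx mulr1n => <-.
rewrite (bigD1 i) //= adjmxE big1 ?addr0 // => k ki.
by rewrite tD ?mul0r // eq_sym.
Qed.

Lemma torus_part_UB t : torus t -> UB B (torus_part B t).
Proof.
move=> tt; split=> [|i j ij]; first exact: torus_part_unitary.
rewrite mxE; case: eqVneq => [eij|]; last by rewrite mulr0n.
move: ij; rewrite -eij orbb => /negbTE iB.
by rewrite mxE iB.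
Qed.

Lemma torus_part_torus S t : torus t -> torus (torus_part S t).
Proof.
by move=> tt; split; [exact: torus_part_unitary | apply: diag_mx_is_diag].
Qed.

Lemma torus_split t : torus t -> t = torus_part B t *m torus_part (~: B) t.
Proof.
move=> [_ /is_diag_mxP tD]; rewrite mulmx_diag; apply/matrixP => i j.
rewrite !mxE inE; case: eqVneq => [<-|ij]; last by rewrite tD ?mulr0n.
by rewrite mulr1n; case: (i \in B); rewrite ?mulr1 ?mul1r.
Qed.

Lemma torus_part_compl_commute t A :
  UB B A -> torus_part (~: B) t *m A = A *m torus_part (~: B) t.
Proof.
move=> [_ A1]; rewrite mul_diag_mx mul_mx_diag; apply/matrixP => i j.
rewrite !mxE !inE.
have offdiag : (i \in B) != (j \in B) -> A i j = 0.
  move=> ijB; rewrite A1; last by case: (i \in B) (j \in B) ijB => [] [].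
  by case: eqVneq => [eij|_]; [rewrite eij eqxx in ijB | rewrite mulr0n].
case iB: (i \in B); case jB: (j \in B) => /=.
- by rewrite mul1r mulr1.
- by rewrite offdiag ?iB ?jB // mulr0 mul0r.
- by rewrite offdiag ?iB ?jB // mulr0 mul0r.
- rewrite A1 ?iB //; case: eqVneq => [->|_]; first by rewrite mulrC.
  by rewrite mulr0n mulr0 mul0r.
Qed.

End UnitaryMinor.

Section ComplexMeasurable.
Context d (T : measurableType d) (R : realType) (D : set T).
Implicit Types f g : T -> R[i].

Definition cmeasurable f :=
  measurable_fun D (fun x => complex.Re (f x)) /\
  measurable_fun D (fun x => complex.Im (f x)).

Lemma cmeasurable_cst c : cmeasurable (fun=> c).
Proof. by split; exact: measurable_cst. Qed.

Lemma cmeasurableD f g :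
  cmeasurable f -> cmeasurable g -> cmeasurable (fun x => f x + g x).
Proof.
move=> [fRe fIm] [gRe gIm]; split.
  by under eq_fun do rewrite Re_add; exact: measurable_funD.
by under eq_fun do rewrite Im_add; exact: measurable_funD.
Qed.

Lemma cmeasurableM f g :
  cmeasurable f -> cmeasurable g -> cmeasurable (fun x => f x * g x).
Proof.
move=> [fRe fIm] [gRe gIm]; split.
  by under eq_fun do rewrite Re_mul; apply: measurable_funB; exact: measurable_funM.
by under eq_fun do rewrite Im_mul; apply: measurable_funD; exact: measurable_funM.
Qed.

Lemma cmeasurable_conj f : cmeasurable f -> cmeasurable (fun x => (f x)^*).
Proof.
move=> [fRe fIm]; split; first by apply: eq_measurable_fun fRe => x _; case: (f x).
by apply: eq_measurable_fun (measurable_funN fIm) => x _ /=; case: (f x).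
Qed.

Lemma cmeasurable_sum (I : Type) (r : seq I) (P : pred I) (F : I -> T -> R[i]) :
  (forall i, cmeasurable (F i)) ->
  cmeasurable (fun x => \sum_(i <- r | P i) F i x).
Proof.
move=> Fm; elim: r => [|i r IH].
  by under eq_fun do rewrite big_nil; exact: cmeasurable_cst.
under eq_fun do rewrite big_cons.
by case: (P i) => //; exact: cmeasurableD.
Qed.

Lemma cmeasurable_level_set f c : measurable D -> cmeasurable f ->
  measurable (D `&` [set x | f x = c]).
Proof.
move=> mD [fRe fIm].
rewrite (_ : _ `&` _ = (D `&` (fun x => complex.Re (f x)) @^-1` [set complex.Re c])
   `&` (D `&` (fun x => complex.Im (f x)) @^-1` [set complex.Im c])).
  by apply: measurableI; [exact: fRe | exact: fIm].
apply/seteqP; split=> x /=; first by move=> [Dx ->].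
by case: (f x) c => a b [p q] /= [[Dx ->] [_ ->]].
Qed.

End ComplexMeasurable.

Section ComplexIntegral.
Context d (T : measurableType d) (R : realType).
Variables (mu : {measure set T -> \bar R}) (D : set T).
Hypothesis mD : measurable D.
Implicit Types f g : T -> R[i].

Let integrableZl_EFin (k : R) (h : T -> R) :
  mu.-integrable D (EFin \o h) -> mu.-integrable D (EFin \o (fun x => k * h x)).
Proof. by move/(integrableZl mD k); apply: eq_integrable. Qed.

Definition cintegrable f :=
  mu.-integrable D (EFin \o (fun x => complex.Re (f x))) /\
  mu.-integrable D (EFin \o (fun x => complex.Im (f x))).

Lemma cintegrableD f g :
  cintegrable f -> cintegrable g -> cintegrable (fun x => f x + g x).
Proof.
move=> [fRe fIm] [gRe gIm]; split.
  apply: eq_integrable mD _ _ _ (integrableD mD fRe gRe) => // x _.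
  by rewrite /= Re_add.
apply: eq_integrable mD _ _ _ (integrableD mD fIm gIm) => // x _.
by rewrite /= Im_add.
Qed.

Lemma cintegrableZl (c : R[i]) f : cintegrable f -> cintegrable (fun x => c * f x).
Proof.
move=> [fRe fIm]; split.
  apply: eq_integrable mD _ _ _ (integrableB mD
    (integrableZl mD (complex.Re c) fRe) (integrableZl mD (complex.Im c) fIm)) => // x _.
  exact: esym (congr1 EFin (Re_mul c (f x))).
apply: eq_integrable mD _ _ _ (integrableD mD
  (integrableZl mD (complex.Re c) fIm) (integrableZl mD (complex.Im c) fRe)) => // x _.
exact: esym (congr1 EFin (Im_mul c (f x))).
Qed.

Lemma eq_cintegral f g : {in D, f =1 g} -> cintegral mu D f = cintegral mu D g.
Proof. by move=> fg; congr Complex; apply: eq_Rintegral => x Dx; rewrite fg. Qed.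

Lemma cintegralD f g : cintegrable f -> cintegrable g ->
  cintegral mu D (fun x => f x + g x) = cintegral mu D f + cintegral mu D g.
Proof.
move=> [fRe fIm] [gRe gIm]; apply/eqP; rewrite eq_complex /= -!RintegralD //.
by apply/andP; split; apply/eqP; apply: eq_Rintegral => x _;
  [exact: Re_add | exact: Im_add].
Qed.

Lemma cintegralZl (c : R[i]) f : cintegrable f ->
  cintegral mu D (fun x => c * f x) = c * cintegral mu D f.
Proof.
move=> [fRe fIm]; case: c => p q; apply/eqP; rewrite eq_complex /=.
rewrite -!RintegralZl // -RintegralB // -?RintegralD //; try exact: integrableZl_EFin.
by apply/andP; split; apply/eqP; apply: eq_Rintegral => x _;
  [exact: Re_mul | exact: Im_mul].
Qed.

Lemma cintegrable_sum (I : Type) (r : seq I) (P : pred I) (F : I -> T -> R[i]) :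
  (forall i, cintegrable (F i)) -> cintegrable (fun x => \sum_(i <- r | P i) F i x).
Proof.
move=> Fi; elim: r => [|i r IH]; under eq_fun do rewrite ?big_nil ?big_cons.
  by split; apply: integrable0.
by case: (P i) => //; apply: cintegrableD.
Qed.

Lemma cintegral_sum (I : Type) (r : seq I) (P : pred I) (F : I -> T -> R[i]) :
  (forall i, cintegrable (F i)) ->
  cintegral mu D (fun x => \sum_(i <- r | P i) F i x) =
  \sum_(i <- r | P i) cintegral mu D (F i).
Proof.
move=> Fi; elim: r => [|i r IH].
  rewrite big_nil; under eq_fun do rewrite big_nil.
  by rewrite /cintegral !Rintegral_cst // !mul0r.
rewrite big_cons -IH; under eq_fun do rewrite big_cons.
by case: (P i) => //; rewrite cintegralD //; exact: cintegrable_sum.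
Qed.

Lemma eq_mxintegral p q (F G : T -> 'M[R[i]]_(p, q)) :
  {in D, F =1 G} -> mxintegral mu D F = mxintegral mu D G.
Proof.
by move=> FG; apply/matrixP => i j; rewrite !mxE; apply: eq_cintegral => x /FG ->.
Qed.

Lemma mxintegral_mull p q r (X : 'M[R[i]]_(p, q)) (F : T -> 'M[R[i]]_(q, r)) :
  (forall i j, cintegrable (fun x => F x i j)) ->
  X *m mxintegral mu D F = mxintegral mu D (fun x => X *m F x).
Proof.
move=> Fi; apply/matrixP => i j; rewrite !mxE.
under [RHS]eq_cintegral do rewrite mxE.
rewrite cintegral_sum => [|k]; last exact: cintegrableZl.
by apply: eq_bigr => k _; rewrite cintegralZl // mxE.
Qed.

Lemma mxintegral_mulr p q r (F : T -> 'M[R[i]]_(p, q)) (X : 'M[R[i]]_(q, r)) :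
  (forall i j, cintegrable (fun x => F x i j)) ->
  mxintegral mu D F *m X = mxintegral mu D (fun x => F x *m X).
Proof.
move=> Fi; apply/matrixP => i j; rewrite !mxE.
under [RHS]eq_cintegral do rewrite mxE; under [RHS]eq_cintegral do
  under eq_bigr do rewrite mulrC.
rewrite cintegral_sum => [|k]; last exact: cintegrableZl.
by apply: eq_bigr => k _; rewrite cintegralZl // mxE mulrC.
Qed.

Definition cbounded f := exists K : R, forall x, D x -> `|f x| <= K%:C.

Hypothesis muD : (mu D < +oo)%E.

Let integrable_of_bounded (h : T -> R) (K : R) : measurable_fun D h ->
  (forall x, D x -> `|h x| <= K) -> mu.-integrable D (EFin \o h).
Proof.
move=> mh hK; apply: measurable_bounded_integrable => //.
exists K; split=> [|M KM x Dx]; first exact: num_real.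
exact: le_trans (hK x Dx) (ltW KM).
Qed.

Lemma cintegrable_bounded f : cmeasurable D f -> cbounded f -> cintegrable f.
Proof.
move=> [mRe mIm] [K fK].
by split; apply: (integrable_of_bounded (K := K)) => // x Dx;
  [exact/norm_Re_le/fK | exact/norm_Im_le/fK].
Qed.

Variable phi : T -> T.
Hypotheses (mphi : measurable_fun setT phi) (phiD : phi @^-1` D = D).
Hypothesis phi_mu : forall E, measurable E -> mu (phi @^-1` E) = mu E.

Lemma Rintegral_comp_invariant (h : T -> R) (K : R) : measurable_fun D h ->
  (forall x, D x -> `|h x| <= K) ->
  \int[mu]_(x in D) h (phi x) = \int[mu]_(x in D) h x.
Proof.
(* [integral_pushforward] needs measurability on the whole space: extend h off D. *)
move=> mh hK; pose H := (h : T -> measurableTypeR R) \_ D.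
have mH : measurable_fun setT H by exact/(measurable_restrictT _ mD).
have HD : {in D, H =1 h} by move=> x Dx; rewrite /H patchT.
have HphiD x : D x -> H (phi x) = h (phi x).
  by rewrite -{1}phiD => Dphix; apply: HD; rewrite inE.
transitivity (\int[mu]_(x in phi @^-1` D) (H \o phi) x).
  by rewrite phiD; apply: eq_Rintegral => x; rewrite inE => /HphiD.
have intHphi : mu.-integrable (phi @^-1` D) ((EFin \o H) \o phi).
  rewrite phiD; apply: (integrable_of_bounded (K := K)).
    exact/measurable_funTS/measurableT_comp.
  by move=> x Dx; rewrite /= HphiD //; apply: hK; rewrite -phiD in Dx.
rewrite -(eq_Rintegral _ HD) /Rintegral; congr fine.
rewrite -(integral_pushforward mphi _ intHphi mD); last exact/measurable_EFinP.
by apply: eq_measure_integral => A mA _; exact: phi_mu.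
Qed.

Lemma cintegral_comp_invariant f : cmeasurable D f -> cbounded f ->
  cintegral mu D (f \o phi) = cintegral mu D f.
Proof.
move=> [mRe mIm] [K fK]; congr Complex.
  apply: (Rintegral_comp_invariant (h := fun x => complex.Re (f x)) (K := K)) => //.
  by move=> x Dx; exact/norm_Re_le/fK.
apply: (Rintegral_comp_invariant (h := fun x => complex.Im (f x)) (K := K)) => //.
by move=> x Dx; exact/norm_Im_le/fK.
Qed.

Lemma mxintegral_comp_invariant p q (F : T -> 'M[R[i]]_(p, q)) :
  (forall i j, cmeasurable D (fun x => F x i j)) ->
  (forall i j, cbounded (fun x => F x i j)) ->
  mxintegral mu D (F \o phi) = mxintegral mu D F.
Proof.
move=> mF bF; apply/matrixP => i j; rewrite !mxE.
exact: (cintegral_comp_invariant (f := fun x => F x i j)).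
Qed.

End ComplexIntegral.

Section MatrixMeasurability.
Context {R : realType} {n : nat}.
Local Notation C := R[i].
Local Notation M := (@Mx R n).

Lemma cmeasurable_entry (D : set M) i j :
  cmeasurable D (fun A : M => (A : 'M[C]_n) i j).
Proof.
by split=> mD Y mY; apply: measurableI => //; apply: sub_sigma_algebra;
  exists i, j, Y; split=> //; [left | right].
Qed.

Lemma cmeasurable_mulmx_entry (D : set M) (g : 'M[C]_n) i j :
  cmeasurable D (fun A : M => (g *m (A : 'M[C]_n)) i j).
Proof.
under eq_fun do rewrite mxE.
by apply: cmeasurable_sum => k; apply: cmeasurableM;
  [exact: cmeasurable_cst | exact: cmeasurable_entry].
Qed.

Lemma measurable_UB (B : {set 'I_n}) : measurable (UB B : set M).
Proof.
pose unit_eq (A : M) (ij : 'I_n * 'I_n) :=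
  ((A : 'M[C]_n) *m adjmx (A : 'M[C]_n)) ij.1 ij.2 = (1%:M : 'M[C]_n) ij.1 ij.2.
pose minor_eq (A : M) (ij : 'I_n * 'I_n) :=
  (ij.1 \notin B) || (ij.2 \notin B) -> (A : 'M[C]_n) ij.1 ij.2 = (ij.1 == ij.2)%:R.
rewrite (_ : UB B = \bigcap_(ij in [set: 'I_n * 'I_n])
    ([set A | unit_eq A ij] `&` [set A | minor_eq A ij])); last first.
  apply/seteqP; split=> A /=.
    by move=> [uA A1] [i j] _; split; [move/matrixP: uA => /(_ i j) | exact: A1].
  move=> h; split; first by apply/matrixP => i j; case: (h (i, j) I).
  by move=> i j; case: (h (i, j) I) => _; exact.
apply: fin_bigcap_measurable => [|[i j] _]; first exact: finite_finset.
apply: measurableI.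
  rewrite -[X in measurable X]setTI; apply: cmeasurable_level_set => //.
  under eq_fun do rewrite mxE.
  apply: cmeasurable_sum => k; apply: cmeasurableM; first exact: cmeasurable_entry.
  by under eq_fun do rewrite !mxE; exact/cmeasurable_conj/cmeasurable_entry.
rewrite /minor_eq /=; have [ijB|ijB] := boolP ((i \notin B) || (j \notin B)).
  rewrite -[X in measurable X]setTI
    (_ : [set _ | _] = [set A : M | (A : 'M[C]_n) i j = (i == j)%:R]).
    by apply: cmeasurable_level_set => //; exact: cmeasurable_entry.
  by apply/seteqP; split=> A /=; [apply | move=> + _].
by rewrite (_ : [set _ | _] = setT) //; apply/seteqP; split=> A //= _ /(negP ijB).
Qed.

Lemma measurable_mulmx (g : 'M[C]_n) :
  measurable_fun setT (fun A : M => (g *m (A : 'M[C]_n) : M)).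
Proof.
apply: (@measurability _ _ M M setT _ (@mx_gen R n) erefl).
move=> _ [_ [i [j [Y [mY [->|->]]]]] <-].
  by have [+ _] := cmeasurable_mulmx_entry setT g i j; exact.
by have [_ +] := cmeasurable_mulmx_entry setT g i j; exact.
Qed.

End MatrixMeasurability.

Lemma floor_eq_dist {R : realType} (x y : R) :
  Num.floor x = Num.floor y -> `|x - y| < 1.
Proof.
move=> xy; have /andP[x1 x2] := floor_itv x; have /andP[y1 y2] := floor_itv y.
rewrite xy intrD in x1 x2; rewrite ltr_norml; apply/andP; split; lra.
Qed.

Section GridCells.
Context {R : realType} {n : nat}.
Local Notation C := R[i].
Local Notation M := (@Mx R n).

Definition mx_continuous_on (D : set 'M[C]_n) (f : 'M[C]_n -> C) :=
  forall A, D A -> forall e : R, 0 < e -> exists2 del : R, 0 < del &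
    forall B, D B -> (forall i j, `|B i j - A i j| < del%:C) -> `|f B - f A| < e%:C.

Definition grid_code (m : nat) (A : 'M[C]_n) : {ffun 'I_n * 'I_n -> int * int} :=
  [ffun ij => (Num.floor (m.+1%:R * complex.Re (A ij.1 ij.2)),
               Num.floor (m.+1%:R * complex.Im (A ij.1 ij.2)))].

Lemma grid_code_dist m A B : grid_code m A = grid_code m B ->
  forall i j, `|A i j - B i j| < (2 / m.+1%:R)%:C.
Proof.
move=> /ffunP AB i j; have := AB (i, j); rewrite !ffunE.
move=> [/floor_eq_dist Re1 /floor_eq_dist Im1].
have m0 : 0 < m.+1%:R :> R by [].
rewrite -mulrBr normrM gtr0_norm // -ltr_pdivlMl // in Re1.
rewrite -mulrBr normrM gtr0_norm // -ltr_pdivlMl // in Im1.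
apply: le_lt_trans (normc_le_Re_Im _) _; rewrite ltcR Re_sub Im_sub.
by rewrite mulr1 in Re1 Im1; rewrite mulrDl mul1r ltrD.
Qed.

Lemma measurable_grid_cell m c : measurable [set A : M | grid_code m A = c].
Proof.
have m0 : 0 < m.+1%:R :> R by [].
have floor_set (k : int) : [set x : R | Num.floor (m.+1%:R * x) = k] =
    `[k%:~R / m.+1%:R, (k + 1)%:~R / m.+1%:R[%classic.
  apply/seteqP; split=> x /=; rewrite in_itv /= ler_pdivrMr // ltr_pdivlMr //.
    by rewrite ![x * _]mulrC => /eqP; rewrite floor_eq.
  by rewrite ![x * _]mulrC => ?; apply/eqP; rewrite floor_eq.
rewrite (_ : [set _ | _] = \bigcap_(ij in [set: 'I_n * 'I_n])
   (((fun A : M => complex.Re ((A : 'M[C]_n) ij.1 ij.2)) @^-1`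
        [set x | Num.floor (m.+1%:R * x) = (c ij).1]) `&`
    ((fun A : M => complex.Im ((A : 'M[C]_n) ij.1 ij.2)) @^-1`
        [set x | Num.floor (m.+1%:R * x) = (c ij).2]))).
  apply: fin_bigcap_measurable => [|[i j] _]; first exact: finite_finset.
  have [mRe mIm] := cmeasurable_entry [set: M] i j.
  by rewrite !floor_set; apply: measurableI; rewrite -[X in measurable X]setTI;
    [exact: mRe | exact: mIm].
apply/seteqP; split=> A /=; first by move=> <- ij _; rewrite ffunE.
move=> Ac; apply/ffunP => ij; rewrite ffunE; have [/= -> ->] := Ac ij I.
by case: (c ij).
Qed.

Lemma measurable_superlevel (D : set M) (h : M -> R) (a : R) : measurable D ->
  mx_continuous_on D (fun A => (h A)%:C) -> measurable (D `&` h @^-1` `]a, +oo[).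
Proof.
(* By continuity the superlevel set is covered by the grid cells it contains. *)
move=> mD hc.
pose S (p : nat * {ffun 'I_n * 'I_n -> int * int}) : set M :=
  [set A | grid_code p.1 A = p.2 /\
           [set B : M | grid_code p.1 B = p.2] `&` D `<=` h @^-1` `]a, +oo[].
suff -> : D `&` h @^-1` `]a, +oo[ = D `&` \bigcup_p S p.
  apply: measurableI => //; apply: countable_bigcupT_measurable => [|p].
    exact: countableP.
  have [sub|nsub] := pselect ([set B : M | grid_code p.1 B = p.2] `&` D `<=`
                              h @^-1` `]a, +oo[).
    rewrite (_ : S p = [set B | grid_code p.1 B = p.2]).
      exact: measurable_grid_cell.
    by apply/seteqP; split=> A /=; [case | split].
  by rewrite (_ : S p = set0) //; apply/seteqP; split=> A // [].
apply/seteqP; split=> A [DA]; last by move=> [p _ [Ap sub]]; split=> //; exact: sub.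
rewrite /preimage /= in_itv /= andbT => ha; split=> //.
have [del del0 hdel] : exists2 del : R, 0 < del & forall B, D B ->
    (forall i j, `|B i j - A i j| < del%:C) -> `|(h B)%:C - (h A)%:C| < (h A - a)%:C.
  by apply: hc; rewrite // subr_gt0.
pose m := Num.trunc (2 / del).
have mdel : (2 / m.+1%:R)%:C < del%:C.
  by rewrite ltcR ltr_pdivrMr // mulrC -ltr_pdivrMr // truncnS_gt.
exists (m, grid_code m A) => //; split=> // B [/= BA DB].
have := hdel B DB (fun i j => lt_trans (grid_code_dist BA i j) mdel).
rewrite -rmorphB normc_real ltcR ltr_norml => /andP[+ _].
by rewrite /preimage /= in_itv /= andbT; lra.
Qed.

Lemma measurable_fun_mx_continuous (D : set M) (h : M -> R) : measurable D ->
  mx_continuous_on D (fun A => (h A)%:C) -> measurable_fun D h.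
Proof.
move=> mD hc; apply: (measurability (@RGenOInfty.G R)).
  exact: RGenOInfty.measurableE.
by move=> _ [_ [a ->] <-]; exact: measurable_superlevel.
Qed.

Lemma cmeasurable_mx_continuous (D : set M) (f : M -> C) : measurable D ->
  mx_continuous_on D f -> cmeasurable D f.
Proof.
move=> mD fc; split; apply: measurable_fun_mx_continuous => // A DA e e0;
  have [del del0 hdel] := fc A DA e e0; exists del => // B DB BA;
  rewrite -rmorphB normc_real; apply: le_lt_trans (hdel B DB BA).
  by rewrite -Re_sub; exact: normc_ge_Re.
by rewrite -Im_sub; exact: normc_ge_Im.
Qed.

End GridCells.

Definition int_to_ord (N : nat) (z : int) : 'I_(N + N).+1 :=
  inord (absz (z + N%:Z)).

Lemma int_to_ord_inj N z w : - (N%:Z) <= z <= N%:Z -> - (N%:Z) <= w <= N%:Z ->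
  int_to_ord N z = int_to_ord N w -> z = w.
Proof.
move=> /andP[z1 z2] /andP[w1 w2] /(congr1 val).
by rewrite /= !inordK ?ltnS; lia.
Qed.

Lemma floor_mul_bounded {R : realType} (N : nat) (x : R) : `|x| <= 1 ->
  - (N%:Z) <= Num.floor (N%:R * x) <= N%:Z.
Proof.
rewrite ler_norml => /andP[x1 x2]; have N0 : 0 <= N%:R :> R by [].
apply/andP; split.
  by rewrite floor_ge_int mulrNz -mulrN1 ler_wpM2l.
by rewrite -(ler_int R); apply: le_trans (floor_le _) _; rewrite ler_piMr.
Qed.

Lemma ler_term_sum (V : numDomainType) (I : eqType) (s : seq I) (F : I -> V) x :
  x \in s -> (forall y, 0 <= F y) -> F x <= \sum_(y <- s) F y.
Proof. by move=> xs F0; rewrite (big_rem x) //= lerDl sumr_ge0. Qed.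

Section UnitaryNet.
Context {R : realType} {n : nat}.
Local Notation C := R[i].

Lemma unitary_finite_net (del : R) : 0 < del ->
  exists s : seq 'M[C]_n, {in s, forall A0, unitary A0} /\
    forall A, unitary A ->
      exists2 A0, A0 \in s & forall i j, `|A i j - A0 i j| < del%:C.
Proof.
(* Unitary entries lie in the unit disc, so their grid codes range over a finite
   type; one unitary is chosen for each code that occurs. *)
move=> del0; pose m := Num.trunc (2 / del).
have mdel : 2 / m.+1%:R < del.
  by rewrite ltr_pdivrMr // mulrC -ltr_pdivrMr // truncnS_gt.
pose fcode (A : 'M[C]_n) := [ffun ij => (int_to_ord m.+1 (grid_code m A ij).1,
                                         int_to_ord m.+1 (grid_code m A ij).2)].
have fcode_grid A B : unitary A -> unitary B -> fcode A = fcode B ->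
    grid_code m A = grid_code m B.
  have code_bounded (X : 'M[C]_n) (ij : 'I_n * 'I_n) : unitary X ->
      - (m.+1%:Z) <= (grid_code m X ij).1 <= m.+1%:Z /\
      - (m.+1%:Z) <= (grid_code m X ij).2 <= m.+1%:Z.
    move=> /(unitary_entry_le1 ij.1 ij.2) X1; rewrite ffunE.
    by split; apply: floor_mul_bounded; [exact: norm_Re_le | exact: norm_Im_le].
  move=> uA uB /ffunP AB; apply/ffunP => ij; have := AB ij; rewrite !ffunE.
  have [A1 A2] := code_bounded A ij uA; have [B1 B2] := code_bounded B ij uB.
  rewrite !ffunE /= in A1 A2 B1 B2 * => -[e1 e2].
  by rewrite (int_to_ord_inj A1 B1 e1) (int_to_ord_inj A2 B2 e2).
have anchor_ex c : exists A0 : 'M[C]_n, unitary A0 /\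
    ((exists2 A, unitary A & fcode A = c) -> fcode A0 = c).
  have [[A uA Ac]|noA] := pselect (exists2 A, unitary A & fcode A = c).
    by exists A.
  by exists 1%:M; split=> [|cA]; [exact: unitary1 | exfalso; exact: noA].
have [anchor anchorP] := choice anchor_ex.
pose N := (m.+1 + m.+1).+1.
exists [seq anchor c | c : {ffun 'I_n * 'I_n -> 'I_N * 'I_N}].
split=> [A0 /mapP[c _ ->]|A uA]; first exact: (anchorP c).1.
have [uA0 A0A] := anchorP (fcode A).
exists (anchor (fcode A)); first by apply: map_f; rewrite mem_enum.
move=> i j; apply: lt_trans (grid_code_dist (fcode_grid _ _ uA uA0 _) i j) _.
  by rewrite A0A //; exists A.
by rewrite ltcR.
Qed.

End UnitaryNet.

Section RepresentationBound.
Context {R : realType} {n dim : nat} (rho : 'M[R[i]]_n -> 'M[R[i]]_dim).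
Hypothesis rep : is_rep rho.
Local Notation C := R[i].

Lemma rep_near1_bounded : exists2 del : R, 0 < del & forall X, unitary X ->
  (forall i j, `|X i j - (1%:M : 'M[C]_n) i j| < del%:C) ->
  forall k l, `|rho X k l| <= 2.
Proof.
have [r1 _ _ rc] := rep; have [del del0 near1] := rc 1%:M unitary1 1 ltr01.
exists del => // X uX X1 k l; have := near1 X uX X1 k l; rewrite r1 => rX1.
rewrite -(subrK ((1%:M : 'M[C]_dim) k l) (rho X k l)) -[2]/(1 + 1).
apply: le_trans (ler_normD _ _) _; apply: lerD; first exact: ltW.
by rewrite mxE; case: eqP; rewrite ?normr1 ?normr0.
Qed.

Lemma rep_bounded :
  exists K : R, forall A, unitary A -> forall k l, `|rho A k l| <= K%:C.
Proof.
(* Write A = A0 (A0^* A) with A0 in a finite net and A0^* A near the identity. *)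
have [r1 rM _ _] := rep; have [del del0 near1] := rep_near1_bounded.
have [s [sU net]] := unitary_finite_net (n := n) (divr_gt0 del0 (ltr0Sn R n)).
pose K := 2 * \sum_(A0 <- s) \sum_k \sum_p `|rho A0 k p|.
have K_real : K \is Num.real.
  by apply/ger0_real/mulr_ge0 => //; do 3!(apply: sumr_ge0 => ? _).
exists (complex.Re K) => A uA k l; rewrite RRe_real //.
have [A0 A0s AA0] := net A uA; have uA0 := sU A0 A0s.
pose X := adjmx A0 *m A; have uX : unitary X := unitaryM (unitary_adjmx uA0) uA.
have X1 i j : `|X i j - (1%:M : 'M[C]_n) i j| < del%:C.
  apply: le_lt_trans (adjmx_mul_dist1 uA0 (fun i j => ltW (AA0 i j)) i j) _.
  by rewrite ltcR mulrA ltr_pdivrMr // mulrC ltr_pM2l // ltr_nat.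
have -> : A = A0 *m X by rewrite /X mulmxA uA0 mul1mx.
rewrite rM // mxE; apply: le_trans (ler_norm_sum _ _ _) _.
apply: le_trans (_ : \sum_p `|rho A0 k p| * 2 <= _).
  by apply: ler_sum => p _; rewrite normrM ler_wpM2l // near1.
rewrite -mulr_suml mulrC ler_wpM2l //.
apply: (le_trans (y := \sum_k' \sum_p `|rho A0 k' p|)).
  apply: (ler_term_sum (F := fun k' => \sum_p `|rho A0 k' p|)) => [|k'].
    exact: mem_index_enum.
  exact: sumr_ge0.
apply: (ler_term_sum (F := fun A1 => \sum_k \sum_p `|rho A1 k p|)) A0s _ => A1.
by do 2!(apply: sumr_ge0 => ? _).
Qed.

End RepresentationBound.

Section HaarAverage.
Context {R : realType} {n dim : nat} (rho : 'M[R[i]]_n -> 'M[R[i]]_dim).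
Hypothesis rep : is_rep rho.
Variables (B : {set 'I_n}) (mu : probability (@Mx R n) R).
Hypothesis haar : is_haar B mu.
Local Notation C := R[i].
Local Notation M := (@Mx R n).
Local Notation U := (UB B : set M).

Let muU : (mu U < +oo)%E.
Proof. by rewrite haar.1 ltry. Qed.

Lemma rep_entry_cmeasurable k l : cmeasurable U (fun A : M => rho A k l).
Proof.
have [_ _ _ rc] := rep.
apply: cmeasurable_mx_continuous; first exact: measurable_UB.
move=> A [uA _] e e0; have [del del0 Adel] := rc A uA e e0.
by exists del => // A' [uA' _] A'A; exact: Adel.
Qed.

Lemma rep_mulmx_cmeasurable (X : 'M[C]_dim) k l :
  cmeasurable U (fun A : M => (rho A *m X) k l).
Proof.
under eq_fun do rewrite mxE.
apply: cmeasurable_sum => p; apply: cmeasurableM; last exact: cmeasurable_cst.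
exact: rep_entry_cmeasurable.
Qed.

Lemma rep_mulmx_cbounded (X : 'M[C]_n) k l : unitary X ->
  cbounded U (fun A : M => (rho A *m rho X) k l).
Proof.
move=> uX; have [_ rM _ _] := rep; have [K rK] := rep_bounded rep.
by exists K => A [uA _]; rewrite -rM //; apply: rK; exact: unitaryM.
Qed.

Lemma rep_cintegrable k l : cintegrable mu U (fun A : M => rho A k l).
Proof.
apply: cintegrable_bounded => //; first exact: measurable_UB.
  exact: rep_entry_cmeasurable.
have [K rK] := rep_bounded rep; exists K => A [uA _]; exact: rK.
Qed.

Lemma haar_average_commute t : torus t ->
  rho t *m mxintegral mu U rho = mxintegral mu U rho *m rho (torus_part (~: B) t).
Proof.
move=> tt; have [_ rM _ _] := rep.
set tB := torus_part B t; set tC := torus_part (~: B) t.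
have tBU : UB B tB := torus_part_UB B tt.
have uC : unitary tC := torus_part_unitary (~: B) tt.
have mU : measurable U := measurable_UB B.
rewrite (mxintegral_mull mU (rho t) rep_cintegrable).
rewrite (mxintegral_mulr mU (rho tC) rep_cintegrable).
rewrite -(mxintegral_comp_invariant mU muU (measurable_mulmx tB)
  (preimage_mulmx_UB tBU) (fun E mE => haar.2 tB tBU E mE)
  (fun k l => rep_mulmx_cmeasurable (rho tC) k l)
  (fun k l => rep_mulmx_cbounded k l uC)).
apply: eq_mxintegral => A; rewrite inE => UA /=.
have uBA : unitary (tB *m A) := unitaryM tBU.1 UA.1.
rewrite -(rM _ _ tt.1 UA.1) -(rM _ _ uBA uC).
by rewrite {1}(torus_split B tt) -mulmxA torus_part_compl_commute // mulmxA.
Qed.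

Lemma haar_average_TorInv v :
  TorInv rho v -> TorInv rho (mxintegral mu U rho *m v).
Proof.
move=> vT t tt; rewrite mulmxA haar_average_commute // -mulmxA vT //.
exact: torus_part_torus.
Qed.

End HaarAverage.

Theorem proposition3p1 (R : realType) (n dim : nat)
  (rho : 'M[R[i]]_n -> 'M[R[i]]_dim) (w : {set 'I_n} -> R)
  (mu : forall B : {set 'I_n}, probability (@Mx R n) R) :
  is_rep rho ->
  (forall B, is_haar B (mu B)) ->
  forall v, TorInv rho v -> TorInv rho (Lap w rho mu *m v).
Proof.
move=> rep haar v vT t tt; rewrite /Lap !mulmx_suml mulmx_sumr.
apply: eq_bigr => B _.
rewrite -!scalemxAl -scalemxAr mulmxBl mul1mx mulmxBr vT //.
by rewrite (haar_average_TorInv rep (haar B) vT tt).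
Qed.
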